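(* Let $(z_n)_{n\in\mathbb{N}}\subset\mathbb{C}$ and $(\lambda_n)_{n\in\mathbb{N}}\subset\mathbb{R}^+$ be sequences and let $x,c_1,c_2$ be positive reals. Let $T,T'\in[1,\infty)$ with $|T-T'|\le1$. Assume that for $t\ge1$, $$\sum_{\lambda_n\le t}|z_n|^2\ll t^{c_1}\qquad\text{and}\qquad\sum_{t<\lambda_n\le t+1}1\ll(\log t)^{c_2}.$$ Then $$\sum_{\lambda_n\le T'}\frac{z_nx^{\frac12+i\lambda_n}}{\frac12+i\lambda_n}=\sum_{\lambda_n\le T}\frac{z_nx^{\frac12+i\lambda_n}}{\frac12+i\lambda_n}+O\Big(x^{1/2}T^{(c_1-2)/2}(\log T)^{c_2/2}\Big).$$
   Context: $f\ll g$ means $|f|\le M|g|$ for some constant $M>0$. *)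

From mathcomp Require Import all_boot all_order all_algebra.
From mathcomp Require Import all_classical all_reals all_analysis.
From mathcomp Require Export complex.
Import GRing.Theory Num.Theory.
Local Open Scope ring_scope.
Local Open Scope complex_scope.

(* Complex power x^(a + i b) = x^a (cos (b ln x) + i sin (b ln x)) for x > 0. *)
Definition cpowr {R : realType} (x a b : R) : R[i] :=
  (x `^ a)%:C * (cos (b * ln x) +i* sin (b * ln x)).

Definition cabs {R : realType} (z : R[i]) : R := Normc.normc z.

Definition Ssum {R : realType} (z : nat -> R[i]) (lam : nat -> R) (x t : R) : R[i] :=
  \sum_(n \in [set n | lam n <= t]%classic)
     (z n * cpowr x (2^-1) (lam n) / (2^-1 +i* lam n)).

From mathcomp Require Import all_boot all_order all_algebra.
From mathcomp Require Import all_classical all_reals all_analysis.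
From mathcomp Require Import complex.
From mathcomp Require Import ring lra.
Import Order.TTheory GRing.Theory Num.Theory.
Local Open Scope ring_scope.
Local Open Scope classical_set_scope.

(* Since |T - T'| <= 1, the two sums differ by the terms with lam_n in a window
   (a, a + 1] where a = min(T, T') >= 1, and each such term is at most
   |z_n| x^(1/2) / a.  By Cauchy-Schwarz the sum of |z_n| over the window is at
   most (number of lam_n in it)^(1/2) (sum_{lam_n <= a + 1} |z_n|^2)^(1/2)
   << (log a)^(c2/2) (a + 1)^(c1/2), and (a + 1)^(c1/2) / a << T^((c1-2)/2)
   because a <= T <= a + 1. *)

Section RealFiniteSums.
Context {R : realDomainType} {I : choiceType}.

Lemma ler_fsum {A : set I} {F G : I -> R} : finite_set A ->
  (forall i, A i -> F i <= G i) -> \sum_(i \in A) F i <= \sum_(i \in A) G i.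
Proof.
move=> Afin FG; rewrite !fsbig_finite// big_seq [leRHS]big_seq.
by apply: ler_sum => i; rewrite in_fset_set// inE; exact: FG.
Qed.

Lemma fsumr_subset_le {A B : set I} {F : I -> R} : finite_set B -> A `<=` B ->
  (forall i, B i -> 0 <= F i) -> \sum_(i \in A) F i <= \sum_(i \in B) F i.
Proof.
move=> Bfin AB F0; rewrite [leRHS](fsbigID A)// setIidr// lerDl.
by apply: fsumr_ge0 => i [/F0].
Qed.

Lemma sum_sqr_le_count (r : seq I) (f : I -> R) :
  (\sum_(i <- r) f i) ^+ 2 <= (\sum_(i <- r) 1) * \sum_(i <- r) f i ^+ 2.
Proof.
have amgm (a b : R) : a * b *+ 2 <= a ^+ 2 + b ^+ 2.
  by rewrite -subr_ge0 addrAC -sqrrB sqr_ge0.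
have const_sum (c : R) : \sum_(i <- r) c = c * \sum_(i <- r) 1.
  by rewrite mulr_sumr; apply: eq_bigr => *; rewrite mulr1.
rewrite -(ler_pMn2r (_ : 0 < 2)%N)//.
have -> : (\sum_(i <- r) 1) * (\sum_(i <- r) f i ^+ 2) *+ 2 =
          \sum_(i <- r) \sum_(j <- r) (f i ^+ 2 + f j ^+ 2).
  rewrite mulr2n [X in _ + X]mulrC !mulr_suml -big_split /=.
  by apply: eq_bigr => i _; rewrite big_split /= (const_sum (f i ^+ 2)) mul1r addrC.
rewrite (expr2 (\sum_(i <- r) f i)) mulr_suml -sumrMnl.
by apply: ler_sum => i _; rewrite mulr_sumr -sumrMnl; apply: ler_sum => j _.
Qed.

Lemma fsum_sqr_le_count {A : set I} {f : I -> R} : finite_set A ->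
  (\sum_(i \in A) f i) ^+ 2 <= (\sum_(i \in A) (1 : R)) * \sum_(i \in A) f i ^+ 2.
Proof. by move=> Afin; rewrite !fsbig_finite//; exact: sum_sqr_le_count. Qed.

End RealFiniteSums.

Section ComplexModulus.
Context {R : realType}.

Lemma cabs_ge0 (w : R[i]) : 0 <= cabs w.
Proof. by case: w => a b; exact: sqrtr_ge0. Qed.

Lemma cabsM (u v : R[i]) : cabs (u * v) = cabs u * cabs v.
Proof. exact: Normc.normcM. Qed.

Lemma cabsV (u : R[i]) : cabs u^-1 = (cabs u)^-1.
Proof. exact: Normc.normcV. Qed.

Lemma cabsN (u : R[i]) : cabs (- u) = cabs u.
Proof. exact: normcN. Qed.

Lemma cabs_fsum_le {I : choiceType} {A : set I} {F : I -> R[i]} :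
  finite_set A -> cabs (\sum_(i \in A) F i) <= \sum_(i \in A) cabs (F i).
Proof.
move=> Afin; rewrite !fsbig_finite//; elim/big_ind2: _ => [|u a v b ua vb|//].
  by rewrite /cabs Normc.normc0.
exact: le_trans (le_normcD _ _) (lerD ua vb).
Qed.

Lemma cabs_cpowr (x a b : R) : cabs (cpowr x a b) = x `^ a.
Proof.
rewrite /cabs /cpowr Normc.normcM /= expr0n addr0 sqrtr_sqr ger0_norm ?powR_ge0//.
by rewrite cos2Dsin2 sqrtr1 mulr1.
Qed.

Lemma cabs_half_iy_ge (y : R) : `|y| <= cabs (2^-1 +i* y)%C.
Proof. by rewrite /cabs /= -sqrtr_sqr ler_wsqrtr// lerDr sqr_ge0. Qed.

Lemma cabs_Ssum_term_le (w : R[i]) (x y : R) : 0 < y ->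
  cabs (w * cpowr x (2^-1) y / (2^-1 +i* y)%C) <= cabs w * x `^ 2^-1 / y.
Proof.
move=> y0; have hy := cabs_half_iy_ge y; rewrite (gtr0_norm y0) in hy.
rewrite cabsM cabsV (cabsM w) cabs_cpowr ler_wpM2l ?mulr_ge0 ?cabs_ge0 ?powR_ge0//.
by rewrite lef_pV2 ?posrE// (lt_le_trans y0 hy).
Qed.

End ComplexModulus.

Definition Sterm {R : realType} (z : nat -> R[i]) (lam : nat -> R) (x : R) (n : nat)
  : R[i] := z n * cpowr x (2^-1) (lam n) / (2^-1 +i* lam n)%C.

Lemma Ssum_diff_window (R : realType) (z : nat -> R[i]) (lam : nat -> R) (x T T' : R) :
  finite_set [set n | lam n <= T'] -> T <= T' ->
  Ssum z lam x T' - Ssum z lam x T =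
    \sum_(n \in [set n | T < lam n <= T']) Sterm z lam x n.
Proof.
move=> fin_T' le_TT'.
have split_T' : [set n | lam n <= T'] =
    [set n | lam n <= T] `|` [set n | T < lam n <= T'].
  apply/seteqP; split=> n /= le_nT'.
    by case: (leP (lam n) T) => h; [left | right; apply/andP].
  by case: le_nT' => [/le_trans->// | /andP[]].
have fin_T : finite_set [set n | lam n <= T].
  by apply: sub_finite_set fin_T' => n /= /le_trans; apply.
have fin_TT' : finite_set [set n | T < lam n <= T'].
  by apply: sub_finite_set fin_T' => n /= /andP[].
rewrite /Ssum split_T' fsbigU0//; first by rewrite addrC addKr.
by move=> n [/= /le_lt_trans + /andP[]] => /[apply]; rewrite ltxx.
Qed.

Section PowerBounds.
Context {R : realType}.

Lemma powR_half_sqr (t c : R) : 0 <= t -> t `^ c = (t `^ (c / 2)) ^+ 2.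
Proof. by move=> t0; rewrite -powR_mulrn ?powR_ge0// -powRrM mulfVK// pnatr_eq0. Qed.

Lemma powR_le_double (e s t : R) : 0 < t -> t <= s <= 2 * t ->
  s `^ e <= (1 + 2 `^ e) * t `^ e.
Proof.
move=> t0 /andP[ts st]; have s0 : 0 < s := lt_le_trans t0 ts.
rewrite mulrDl mul1r; case: (leP 0 e) => e0.
  rewrite -powRM ?ler_wpDl ?powR_ge0// ?ge0_ler_powR ?nnegrE//; lra.
apply: (@le_trans _ _ (t `^ e)); last by rewrite lerDl mulr_ge0 ?powR_ge0.
rewrite -(opprK e) (powRN s) (powRN t) lef_pV2 ?posrE ?powR_gt0//.
by rewrite ge0_ler_powR ?nnegrE ?oppr_ge0 ?(ltW e0) ?(ltW t0) ?(ltW s0).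
Qed.

Lemma shifted_ratio_le {c1 c2 a T : R} : 0 < c1 -> 0 <= c2 -> 1 <= a ->
  a <= T <= a + 1 ->
  (a + 1) `^ (c1 / 2) / a * (ln a) `^ (c2 / 2)
    <= 2 * (1 + 2 `^ ((c1 - 2) / 2)) * (T `^ ((c1 - 2) / 2) * (ln T) `^ (c2 / 2)).
Proof.
move=> c1_gt0 c2_ge0 a_ge1 /andP[aT Ta]; set e := (c1 - 2) / 2.
have a_gt0 : 0 < a := lt_le_trans ltr01 a_ge1.
have ratio : (a + 1) `^ (c1 / 2) / a <= 2 * ((1 + 2 `^ e) * T `^ e).
  have a1_ge0 : 0 <= a + 1 by lra.
  rewrite -mulr_powRB1 ?divr_gt0// mulrAC.
  rewrite (_ : c1 / 2 - 1 = e); last by rewrite /e; field.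
  apply: ler_pM; rewrite ?divr_ge0 ?powR_ge0 ?(ltW a_gt0)//.
    by rewrite ler_pdivrMr//; lra.
  by apply: powR_le_double; [exact: lt_le_trans a_gt0 aT | apply/andP; split; lra].
have logs : (ln a) `^ (c2 / 2) <= (ln T) `^ (c2 / 2).
  have T_ge1 : 1 <= T := le_trans a_ge1 aT.
  by rewrite ge0_ler_powR ?nnegrE ?ln_ge0 ?divr_ge0 ?ler_ln ?posrE// (lt_le_trans ltr01).
rewrite mulrA in ratio; rewrite (mulrA _ (T `^ e)).
by apply: ler_pM; rewrite ?divr_ge0 ?powR_ge0 ?(ltW a_gt0).
Qed.

End PowerBounds.

Section BlockSums.
Context {R : realType} {z : nat -> R[i]} {lam : nat -> R} {c1 c2 M1 M2 : R}.
Hypothesis lam_gt0 : forall n, 0 < lam n.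
Hypothesis c1_gt0 : 0 < c1.
Hypothesis c2_ge0 : 0 <= c2.
Hypothesis fin_lam : forall t : R, finite_set [set n | lam n <= t].
Hypothesis energy_bound : forall t : R, 1 <= t ->
  \sum_(n \in [set n | lam n <= t]) cabs (z n) ^+ 2 <= M1 * t `^ c1.
Hypothesis count_bound : forall t : R, 1 <= t ->
  \sum_(n \in [set n | t < lam n <= t + 1]) (1 : R) <= M2 * (ln t) `^ c2.

Local Notation block a := [set n | a < lam n <= a + 1].

Let block_sub (a : R) : block a `<=` [set n | lam n <= a + 1].
Proof. by move=> n /andP[]. Qed.

Let block_finite (a : R) : finite_set (block a).
Proof. exact: sub_finite_set (block_sub a) (fin_lam _). Qed.

Lemma block_abs_sum_le {a : R} : 1 <= a ->
  \sum_(n \in block a) cabs (z n)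
    <= (`|M1| + `|M2|) * ((a + 1) `^ (c1 / 2) * (ln a) `^ (c2 / 2)).
Proof.
move=> a_ge1; set P := (a + 1) `^ (c1 / 2); set Q := (ln a) `^ (c2 / 2).
have count : \sum_(n \in block a) (1 : R) <= `|M2| * Q ^+ 2.
  apply: le_trans (count_bound _ a_ge1) _.
  by rewrite /Q -powR_half_sqr ?ln_ge0// ler_wpM2r ?powR_ge0 ?ler_norm.
have energy : \sum_(n \in block a) cabs (z n) ^+ 2 <= `|M1| * P ^+ 2.
  have a1_ge1 : 1 <= a + 1 by lra.
  apply: le_trans (fsumr_subset_le (fin_lam _) (block_sub a) _) _.
    by move=> n _; exact: sqr_ge0.
  apply: le_trans (energy_bound _ a1_ge1) _.
  by rewrite /P -powR_half_sqr ?ler_wpM2r ?powR_ge0 ?ler_norm//; lra.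
have sum_ge0 (F : nat -> R) : (forall n, 0 <= F n) -> 0 <= \sum_(n \in block a) F n.
  by move=> F_ge0; apply: fsumr_ge0 => n _.
rewrite -ler_sqr ?nnegrE ?sum_ge0 ?mulr_ge0 ?addr_ge0 ?powR_ge0 //; last first.
  by move=> n; exact: cabs_ge0.
apply: le_trans (fsum_sqr_le_count (block_finite a)) _.
have count_ge0 := sum_ge0 (fun=> 1) (fun=> ler01).
have energy_ge0 := sum_ge0 _ (fun n => sqr_ge0 (cabs (z n))).
apply: le_trans (ler_pM count_ge0 energy_ge0 count energy) _.
have M1M2 : `|M1| * `|M2| <= (`|M1| + `|M2|) ^+ 2.
  by have := normr_ge0 M1; have := normr_ge0 M2; nra.
rewrite (_ : `|M2| * Q ^+ 2 * (`|M1| * P ^+ 2) = `|M1| * `|M2| * (P * Q) ^+ 2); last by ring.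
by rewrite [X in _ <= X]exprMn ler_wpM2r ?sqr_ge0.
Qed.

Lemma block_partial_sum_le {x a : R} {S : set nat} : 0 < x -> 1 <= a ->
  S `<=` block a ->
  cabs (\sum_(n \in S) Sterm z lam x n)
    <= x `^ 2^-1 / a * ((`|M1| + `|M2|) * ((a + 1) `^ (c1 / 2) * (ln a) `^ (c2 / 2))).
Proof.
move=> x_gt0 a_ge1 S_sub; have S_fin := sub_finite_set S_sub (block_finite a).
have a_gt0 : 0 < a := lt_le_trans ltr01 a_ge1.
apply: le_trans (cabs_fsum_le S_fin) _.
apply: (@le_trans _ _ (\sum_(n \in S) x `^ 2^-1 / a * cabs (z n))).
  apply: ler_fsum => // n /S_sub /andP[a_lt _].
  apply: le_trans (cabs_Ssum_term_le _ _ _ (lam_gt0 n)) _.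
  rewrite [X in _ <= X]mulrC -mulrA ler_wpM2l ?cabs_ge0// ler_wpM2l ?powR_ge0//.
  by rewrite lef_pV2 ?posrE// ltW.
rewrite -mulr_fsumr ler_wpM2l ?divr_ge0 ?powR_ge0 ?(ltW a_gt0)//.
apply: le_trans (fsumr_subset_le (block_finite a) S_sub _) (block_abs_sum_le a_ge1).
by move=> n _; exact: cabs_ge0.
Qed.

Lemma block_partial_sum_bound {x a T : R} {S : set nat} : 0 < x -> 1 <= a ->
  a <= T <= a + 1 -> S `<=` block a ->
  cabs (\sum_(n \in S) Sterm z lam x n)
    <= 2 * (1 + 2 `^ ((c1 - 2) / 2)) * (`|M1| + `|M2|) *
       (x `^ 2^-1 * T `^ ((c1 - 2) / 2) * (ln T) `^ (c2 / 2)).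
Proof.
move=> x_gt0 a_ge1 aT S_sub.
apply: le_trans (block_partial_sum_le x_gt0 a_ge1 S_sub) _.
set X := x `^ 2^-1; set K := `|M1| + `|M2|; set e := (c1 - 2) / 2.
rewrite (_ : X / a * _ = X * K * ((a + 1) `^ (c1 / 2) / a * ln a `^ (c2 / 2)));
  last by ring.
rewrite (_ : _ * _ * K * _ = X * K * (2 * (1 + 2 `^ e) * (T `^ e * ln T `^ (c2 / 2))));
  last by ring.
by rewrite ler_wpM2l ?mulr_ge0 ?powR_ge0 ?addr_ge0// shifted_ratio_le.
Qed.

End BlockSums.

Theorem lemma4p4 (R : realType) (z : nat -> R[i]) (lam : nat -> R) (c1 c2 : R) :
  (forall n, 0 < lam n) ->
  0 < c1 -> 0 < c2 ->
  (forall t : R, finite_set [set n | lam n <= t]) ->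
  (exists M1 : R, forall t : R, 1 <= t ->
     \sum_(n \in [set n | lam n <= t]) cabs (z n) ^+ 2 <= M1 * t `^ c1) ->
  (exists M2 : R, forall t : R, 1 <= t ->
     \sum_(n \in [set n | t < lam n <= t + 1]) (1 : R) <= M2 * (ln t) `^ c2) ->
  exists C : R, forall x T T' : R,
    0 < x -> 1 <= T -> 1 <= T' -> `|T - T'| <= 1 ->
    cabs (Ssum z lam x T' - Ssum z lam x T)
      <= C * (x `^ 2^-1 * T `^ ((c1 - 2) / 2) * (ln T) `^ (c2 / 2)).
Proof.
move=> lam_gt0 c1_gt0 c2_gt0 fin_lam [M1 energy_bound] [M2 count_bound].
exists (2 * (1 + 2 `^ ((c1 - 2) / 2)) * (`|M1| + `|M2|)).
move=> x T T' x_gt0 T_ge1 T'_ge1; rewrite ler_norml => /andP[lo hi].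
have bound := block_partial_sum_bound lam_gt0 c1_gt0 (ltW c2_gt0) fin_lam
  energy_bound count_bound x_gt0.
have window u v : u <= v <= u + 1 ->
    [set n | u < lam n <= v] `<=` [set n | u < lam n <= u + 1].
  by move=> /andP[_ vu] n /andP[lt_n le_n]; rewrite /= lt_n (le_trans le_n vu).
case: (leP T T') => [le_TT' | lt_T'T].
  rewrite Ssum_diff_window//.
  by apply: bound T_ge1 _ (window _ _ _); apply/andP; split; lra.
rewrite -opprB cabsN Ssum_diff_window ?(ltW lt_T'T)//.
by apply: bound T'_ge1 _ (window _ _ _); apply/andP; split; lra.
Qed.
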